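(* Let $g$ be a feasible subflow allocation with demand totals $f=(f_k)_{k\in\mathcal{D}}$. If $f$ is max-min fair, i.e. there is no feasible subflow allocation whose totals $f'$ satisfy $f'_k>f_k$ for some $k$ while $f'_j\ge f_j$ for every $j$ with $f_j\le f_k$, then $g$ is bandwidth-bottlenecked.
   Context: Demands $\mathcal{D}$, links $\mathcal{E}$ with capacities $c_e>0$, each demand $k$ with requested rate $d_k>0$ and finite path set $\mathcal{P}_k$ (paths are subsets of $\mathcal{E}$). Each pair $(k,p)$, $p\in\mathcal{P}_k$, is a subflow. Augmented network: in addition to the links in $\mathcal{E}$, each demand $k$ has a virtual link $v_k$ of capacity $d_k$; subflow $(k,p)$ traverses the links of $p$ together with $v_k$. A subflow allocation $g=(g_{k,p})\ge 0$ is feasible if $\sum_{(k,p):e\in p}g_{k,p}\le c_e$ for all $e\in\mathcal{E}$ and $\sum_{p\in\mathcal{P}_k}g_{k,p}\le d_k$ for all $k$; its demand totals are $f_k=\sum_{p\in\mathcal{P}_k}g_{k,p}$. A link is saturated if its capacity constraint holds with equality. A feasible subflow allocation $g$ with totals $f$ is bandwidth-bottlenecked if for every demand $k$ and every $p\in\mathcal{P}_k$ there is a saturated link $l$ on the augmented path of $(k,p)$ such that $f_k\ge f_j$ for every demand $j$ having a subflow with positive rate traversing $l$. *)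

From mathcomp Require Import all_boot all_order all_algebra.
From mathcomp Require Import reals.
Set Implicit Arguments. Unset Strict Implicit. Unset Printing Implicit Defensive.
Import Order.TTheory GRing.Theory Num.Theory.
Local Open Scope ring_scope.

Section Network.
Variables (R : realType) (D E : finType).
(* c : link capacities, d : requested rates, P k : finite set of paths of k *)
Variables (c : E -> R) (d : D -> R) (P : D -> {set {set E}}).

(* A subflow allocation assigns a rate g k p to each subflow (k,p), p \in P k;
   values at p \notin P k are irrelevant and ignored. *)
Definition total (g : D -> {set E} -> R) (k : D) : R := \sum_(p in P k) g k p.

(* Links of the augmented network: real links (inl e) and virtual links (inr k). *)
Definition aug_link := (E + D)%type.

Definition aug_cap (l : aug_link) : R :=
  match l with inl e => c e | inr k => d k end.

Definition traverses (j : D) (q : {set E}) (l : aug_link) : bool :=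
  match l with inl e => e \in q | inr k => j == k end.

Definition aug_load (g : D -> {set E} -> R) (l : aug_link) : R :=
  \sum_(j : D) \sum_(q in P j | traverses j q l) g j q.

Definition feasible (g : D -> {set E} -> R) : Prop :=
  (forall k p, p \in P k -> 0 <= g k p) /\
  (forall e : E, aug_load g (inl e) <= c e) /\
  (forall k : D, total g k <= d k).

Definition saturated (g : D -> {set E} -> R) (l : aug_link) : Prop :=
  aug_load g l = aug_cap l.

Definition bandwidth_bottlenecked (g : D -> {set E} -> R) : Prop :=
  feasible g /\
  forall k p, p \in P k ->
    exists l : aug_link,
      [/\ traverses k p l, saturated g l &
          forall j q, q \in P j -> traverses j q l -> 0 < g j q ->
            total g j <= total g k].

Definition max_min_fair (g : D -> {set E} -> R) : Prop :=
  ~ exists g' : D -> {set E} -> R,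
      feasible g' /\
      exists k, total g k < total g' k /\
        forall j, total g j <= total g k -> total g j <= total g' j.

End Network.

(* Suppose some subflow (k,p) had no bottleneck: every saturated link on its
   augmented path carries a positive-rate subflow of a demand whose total
   exceeds f_k.  Push a small eps more along (k,p) and take eps away from every
   positive subflow of every demand with total above f_k.  Links with slack
   absorb the increase as long as eps is below every positive slack, saturated
   links on the path lose at least eps, and no rate becomes negative as long as
   eps is below every positive rate.  The result is feasible, raises f_k, and
   leaves every total f_j <= f_k unchanged or larger, against max-min
   fairness. *)
From Pilot Require Import Defs.
From mathcomp Require Import all_boot all_order all_algebra.
From mathcomp Require Import reals lra.
From Stdlib Require Import Classical.
Set Implicit Arguments. Unset Strict Implicit. Unset Printing Implicit Defensive.
Import Order.TTheory GRing.Theory Num.Theory.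
Local Open Scope ring_scope.

Lemma exists_pos_lower_bound (R : realDomainType) (T : finType) (a : T -> R) :
  exists2 eps : R, 0 < eps & forall t, 0 < a t -> eps <= a t.
Proof.
have [t0 at0_gt0 | no_pos] := pickP (fun t => 0 < a t); last first.
  by exists 1 => // t; rewrite no_pos.
case: (@arg_minP _ _ _ t0 (fun t => 0 < a t) a at0_gt0) => t at_gt0 t_min.
by exists (a t) => // t' at'_gt0; apply: t_min.
Qed.

Lemma ler_sum_term (R : numDomainType) (I : finType) (Q : pred I) (F : I -> R) i :
  Q i -> (forall j, Q j -> 0 <= F j) -> F i <= \sum_(j | Q j) F j.
Proof.
move=> Qi F_ge0; rewrite (bigD1 i) //= lerDl sumr_ge0 // => j /andP[Qj _].
exact: F_ge0.
Qed.

Section AugmentedLoad.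
Variables (R : realType) (D E : finType) (P : D -> {set {set E}}).
Local Notation tot := (Defs.total P).

Lemma aug_load_inr (g : D -> {set E} -> R) j : aug_load P g (inr j) = tot g j.
Proof.
rewrite /aug_load (bigD1 j) //= [X in _ + X]big1 ?addr0.
  by apply: eq_bigl => q; rewrite eqxx andbT.
move=> i ij; apply: big1 => q /andP[_ /eqP eq_ij].
by rewrite eq_ij eqxx in ij.
Qed.

Lemma aug_load_addB (g a b : D -> {set E} -> R) l :
  aug_load P (fun j q => g j q + a j q - b j q) l =
  aug_load P g l + aug_load P a l - aug_load P b l.
Proof.
rewrite /aug_load -big_split -sumrB /=; apply: eq_bigr => j _.
by rewrite -big_split -sumrB.
Qed.

Lemma total_addB (g a b : D -> {set E} -> R) j :
  tot (fun j q => g j q + a j q - b j q) j = tot g j + tot a j - tot b j.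
Proof. by rewrite -!aug_load_inr aug_load_addB. Qed.

Section Nonnegative.
Variables (g : D -> {set E} -> R) (g_ge0 : forall j q, 0 <= g j q).

Lemma aug_load_ge0 l : 0 <= aug_load P g l.
Proof. by apply: sumr_ge0 => j _; apply: sumr_ge0 => q _. Qed.

Lemma ler_aug_load l j q :
  q \in P j -> traverses j q l -> g j q <= aug_load P g l.
Proof.
move=> qPj jql; apply: (le_trans (y := \sum_(q' in P j | traverses j q' l) g j q')).
  by apply: ler_sum_term => [|q' _]; rewrite ?qPj ?jql.
by apply: ler_sum_term => // i _; apply: sumr_ge0.
Qed.

End Nonnegative.

Definition point_flow (k : D) (p : {set E}) (eps : R) (j : D) (q : {set E}) : R :=
  if (j == k) && (q == p) then eps else 0.

Lemma point_flow_ge0 k p eps j q : 0 <= eps -> 0 <= point_flow k p eps j q.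
Proof. by rewrite /point_flow; case: ifP. Qed.

Lemma aug_load_point_flow k p eps l : p \in P k ->
  aug_load P (point_flow k p eps) l = if traverses k p l then eps else 0.
Proof.
move=> pPk; rewrite /aug_load (bigD1 k) //= [X in _ + X]big1 ?addr0; last first.
  by move=> j /negbTE jk; apply: big1 => q _; rewrite /point_flow jk.
case: ifP => kpl.
  rewrite (bigD1 p) /=; last by rewrite pPk kpl.
  rewrite /point_flow !eqxx big1 ?addr0 // => q /andP[_ /negbTE ->].
  by rewrite andbF.
apply: big1 => q /andP[_ kql]; rewrite /point_flow eqxx /=.
by case: eqP kql => // ->; rewrite kpl.
Qed.

Lemma total_point_flow k p eps j : p \in P k ->
  tot (point_flow k p eps) j = if j == k then eps else 0.
Proof. by move=> pPk; rewrite -aug_load_inr aug_load_point_flow //= eq_sym. Qed.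

End AugmentedLoad.

Lemma feasibleP (R : realType) (D E : finType) (c : E -> R) (d : D -> R)
    (P : D -> {set {set E}}) (g : D -> {set E} -> R) :
  feasible c d P g <->
  (forall k p, p \in P k -> 0 <= g k p) /\
  (forall l, aug_load P g l <= aug_cap c d l).
Proof.
split=> [[g_ge0 [cap_e cap_k]] | [g_ge0 cap_l]]; split=> //.
  by case=> [e | k] /=; rewrite ?aug_load_inr.
split=> [e | k]; first exact: (cap_l (inl e)).
by rewrite -aug_load_inr; exact: (cap_l (inr k)).
Qed.

Section Perturbation.
Variables (R : realType) (D E : finType) (c : E -> R) (d : D -> R).
Variables (P : D -> {set {set E}}) (g : D -> {set E} -> R).
Hypothesis g_feasible : feasible c d P g.
Local Notation tot := (Defs.total P).

Definition bottleneck (k : D) (p : {set E}) (l : aug_link D E) : Prop :=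
  [/\ traverses k p l, saturated c d P g l &
      forall j q, q \in P j -> traverses j q l -> 0 < g j q -> tot g j <= tot g k].

Definition richer_flow (k : D) (eps : R) (j : D) (q : {set E}) : R :=
  if (0 < g j q) && (tot g k < tot g j) then eps else 0.

Definition shift (k : D) (p : {set E}) (eps : R) (j : D) (q : {set E}) : R :=
  g j q + point_flow k p eps j q - richer_flow k eps j q.

Lemma richer_flow_ge0 k eps j q : 0 <= eps -> 0 <= richer_flow k eps j q.
Proof. by rewrite /richer_flow; case: ifP. Qed.

Lemma total_richer_flow k eps j : tot g j <= tot g k -> tot (richer_flow k eps) j = 0.
Proof.
by rewrite leNgt => /negbTE jk; apply: big1 => q _; rewrite /richer_flow jk andbF.
Qed.

Lemma aug_load_richer_flow k p eps l : 0 <= eps -> ~ bottleneck k p l ->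
  traverses k p l -> saturated c d P g l -> eps <= aug_load P (richer_flow k eps) l.
Proof.
move=> eps_ge0 not_bn kpl sat_l.
have [j [q [qPj jql gjq_gt0 kj]]] : exists j q,
    [/\ q \in P j, traverses j q l, 0 < g j q & tot g k < tot g j].
  apply: NNPP => no_richer; apply: not_bn; split=> // j q qPj jql gjq_gt0.
  by rewrite leNgt; apply/negP => kj; apply: no_richer; exists j, q.
apply: le_trans (ler_aug_load (fun j' q' => richer_flow_ge0 k j' q' eps_ge0) qPj jql).
by rewrite /richer_flow gjq_gt0 kj.
Qed.

Lemma shift_feasible k p eps : p \in P k -> 0 < eps ->
  (forall j q, q \in P j -> 0 < g j q -> eps <= g j q) ->
  (forall l, aug_load P g l < aug_cap c d l -> eps <= aug_cap c d l - aug_load P g l) ->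
  (forall l, ~ bottleneck k p l) ->
  feasible c d P (shift k p eps).
Proof.
move=> pPk eps_gt0 eps_rate eps_slack no_bn.
have eps_ge0 := ltW eps_gt0.
have [g_ge0 g_cap] := (feasibleP c d P g).1 g_feasible.
apply/feasibleP; split=> [j q qPj | l].
  have := g_ge0 j q qPj; have := point_flow_ge0 k p j q eps_ge0.
  rewrite /shift /richer_flow; case: ifP => [/andP[gjq_gt0 _] | _]; last by lra.
  by have := eps_rate j q qPj gjq_gt0; lra.
rewrite aug_load_addB aug_load_point_flow //.
have := aug_load_ge0 P (fun j q => richer_flow_ge0 k j q eps_ge0) l.
have := g_cap l; case: ifP => kpl gl cut_ge0; last by lra.
have [sat_l | unsat_l] := eqVneq (aug_load P g l) (aug_cap c d l).
  by have := aug_load_richer_flow eps_ge0 (no_bn l) kpl sat_l; lra.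
have slack_gt0 : aug_load P g l < aug_cap c d l by rewrite lt_neqAle unsat_l gl.
by have := eps_slack l slack_gt0; lra.
Qed.

Lemma shift_total_gt k p eps : p \in P k -> 0 < eps -> tot g k < tot (shift k p eps) k.
Proof.
move=> pPk eps_gt0; rewrite total_addB total_point_flow // eqxx.
by rewrite total_richer_flow // subr0 ltrDl.
Qed.

Lemma shift_total_ge k p eps j : p \in P k -> 0 <= eps ->
  tot g j <= tot g k -> tot g j <= tot (shift k p eps) j.
Proof.
move=> pPk eps_ge0 jk; rewrite total_addB total_point_flow // total_richer_flow //.
by rewrite subr0 lerDl; case: ifP.
Qed.

End Perturbation.

Theorem mainTheorem4 (R : realType) (D E : finType)
  (c : E -> R) (d : D -> R) (P : D -> {set {set E}})
  (hc : forall e, 0 < c e) (hd : forall k, 0 < d k)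
  (g : D -> {set E} -> R) :
  feasible c d P g -> max_min_fair c d P g -> bandwidth_bottlenecked c d P g.
Proof.
move=> g_feasible g_fair; split=> // k p pPk.
apply: NNPP => /not_ex_all_not no_bn.
have [eps_r eps_r_gt0 eps_rate] := exists_pos_lower_bound (fun t => g t.1 t.2).
have [eps_s eps_s_gt0 eps_slack] :=
  exists_pos_lower_bound (fun l => aug_cap c d l - aug_load P g l).
set eps := Num.min eps_r eps_s.
have eps_gt0 : 0 < eps by rewrite lt_min eps_r_gt0.
apply: g_fair; exists (shift P g k p eps); split.
  apply: shift_feasible => // [j q _ gjq_gt0 | l].
    by rewrite ge_min (eps_rate (j, q)).
  by rewrite -subr_gt0 => slack_gt0; rewrite ge_min eps_slack ?orbT.
exists k; split; first exact: shift_total_gt.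
by move=> j; apply: shift_total_ge => //; apply: ltW.
Qed.
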